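(* Let $\mathscr Q_n$ be a non-singular quadric in $\mathrm{PG}(n,2)$ of projective index $g\ge1$, let $0\le s<g$, let $\alpha_s$ be an $s$-dimensional subspace contained in $\mathscr Q_n$, and let $\Gamma_s$ be the graph constructed from $\alpha_s$ as described below. (A) If $\Sigma$ is a generator of $\mathscr Q_n$ containing $\alpha_s$, then the points of $\Sigma$ form a clique of $\Gamma_s$ of size $2^{g+1}-1$. (B) Let $\Pi,\Sigma$ be generators of $\mathscr Q_n$ such that $\alpha_s\subseteq\Sigma$, $\alpha_s\not\subseteq\Pi$, and $\Pi\cap\Sigma$ has dimension $g-1$. Let $\mathcal C_a$ be the set of $2^s-1$ points of $\alpha_s\cap\Pi$, $\mathcal C_b$ the set of $2^g-2^s$ points of $\Sigma$ not in $\alpha_s\cup\Pi$, and $\mathcal C_c$ the set of $2^g$ points of $\Pi\setminus\Sigma$. Then $\mathcal C_a\cup\mathcal C_b\cup\mathcal C_c$ is a clique of $\Gamma_s$ of size $2^{g+1}-1$.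
   Context: A non-singular quadric $\mathscr Q_n$ in $\mathrm{PG}(n,2)$ is the point set of a non-degenerate quadric; its projective index $g$ is the largest dimension of a projective subspace contained in $\mathscr Q_n$, and the $g$-dimensional subspaces contained in $\mathscr Q_n$ are its generators. The point-graph $\Gamma$ has vertex set the points of $\mathscr Q_n$, two distinct points adjacent iff the line joining them is contained in $\mathscr Q_n$. A point $X$ of $\mathscr Q_n$ has type (i) if $X\in\alpha_s$; type (ii) if $X\notin\alpha_s$ and $\langle\alpha_s,X\rangle\subseteq\mathscr Q_n$; type (iii) otherwise. Let $\mathcal X_s$ be the type (ii) points and $\mathcal Y_s$ the points of type (i) or (iii). The graph $\Gamma_s$ has the same vertex set as $\Gamma$ and the same edges, except that for each vertex $R\in\mathcal Y_s$ having exactly $\frac12|\mathcal X_s|$ neighbours in $\mathcal X_s$ (in $\Gamma$), those edges are deleted and $R$ is joined instead to the other $\frac12|\mathcal X_s|$ vertices of $\mathcal X_s$. *)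

From HB Require Import structures.
From mathcomp Require Import all_boot all_order all_algebra.
Set Implicit Arguments. Unset Strict Implicit. Unset Printing Implicit Defensive.
Import GRing.Theory.
Local Open Scope ring_scope.

(* PG(n,2): vectors of F_2^(n+1); since the field is F_2, every projective
   point is represented by a unique nonzero vector. A projective subspace of
   dimension d is a vector subspace (vspace) of dimension d+1. *)
Notation vec n := 'rV['F_2]_(n.+1).

(* The quadratic form with coefficient matrix A: Q(x) = x A x^T
   = sum_{i,j} a_ij x_i x_j (every quadratic form arises this way). *)
Definition qf n (A : 'M['F_2]_(n.+1)) (x : vec n) : 'F_2 :=
  (x *m A *m x^T) ord0 ord0.

Definition polar n (A : 'M['F_2]_(n.+1)) (x y : vec n) : 'F_2 :=
  qf A (x + y) - qf A x - qf A y.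

Definition nonsingular n (A : 'M['F_2]_(n.+1)) : Prop :=
  forall x : vec n, x != 0 -> qf A x = 0 -> exists y, polar A x y != 0.

Definition on_quadric n (A : 'M['F_2]_(n.+1)) (U : {vspace vec n}) : bool :=
  [forall v : vec n, (v \in U) ==> (qf A v == 0)].

Definition proj_index n (A : 'M['F_2]_(n.+1)) (g : nat) : Prop :=
  (exists U, on_quadric A U /\ \dim U = g.+1) /\
  (forall U, on_quadric A U -> (\dim U <= g.+1)%N).

Definition generator n (A : 'M['F_2]_(n.+1)) (g : nat) (U : {vspace vec n}) :=
  on_quadric A U /\ \dim U = g.+1.

Definition pts n (U : {vspace vec n}) : {set vec n} :=
  [set v : vec n | (v \in U) && (v != 0)].

Definition qpts n (A : 'M['F_2]_(n.+1)) : {set vec n} :=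
  [set v : vec n | (v != 0) && (qf A v == 0)].

Definition adjG n (A : 'M['F_2]_(n.+1)) (x y : vec n) : bool :=
  [&& x \in qpts A, y \in qpts A, x != y & on_quadric A <<[:: x; y]>>%VS].

Definition Xs n (A : 'M['F_2]_(n.+1)) (alpha : {vspace vec n}) : {set vec n} :=
  [set x in qpts A | (x \notin alpha) &&
     on_quadric A (alpha + <[x]>)%VS ].

Definition Ys n (A : 'M['F_2]_(n.+1)) (alpha : {vspace vec n}) : {set vec n} :=
  qpts A :\: Xs A alpha.

Definition switched n (A : 'M['F_2]_(n.+1)) (alpha : {vspace vec n})
    (r : vec n) : bool :=
  (r \in Ys A alpha) &&
  ((#|[set x in Xs A alpha | adjG A r x ]| * 2)%N == #|Xs A alpha|).

Definition adjGs n (A : 'M['F_2]_(n.+1)) (alpha : {vspace vec n})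
    (x y : vec n) : Prop :=
  [/\ x \in qpts A, y \in qpts A, x != y &
   adjG A x y (+)
     ((switched A alpha x && (y \in Xs A alpha)) ||
      (switched A alpha y && (x \in Xs A alpha)))].

Definition clique_Gs n (A : 'M['F_2]_(n.+1)) (alpha : {vspace vec n})
    (C : {set vec n}) : Prop :=
  C \subset qpts A /\
  forall x y, x \in C -> y \in C -> x != y -> adjGs A alpha x y.

From mathcomp Require Import all_boot all_order all_algebra all_field.
From mathcomp Require Import ring zify.
Set Implicit Arguments. Unset Strict Implicit. Unset Printing Implicit Defensive.
Import GRing.Theory.
Local Open Scope ring_scope.

(* Two points of a totally singular subspace are orthogonal for the polar
   form, hence adjacent in Gamma.  No point of a generator Sigma through alpha
   is switched: the points of alpha are adjacent to every point of X_s (which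
   is nonempty), and the other points of Sigma lie in X_s.
   In (B), a point c of Pi \ Sigma is orthogonal to no point of
   Sigma \ Pi, for otherwise Sigma + <c> would be a totally singular
   subspace larger than a generator.  In particular c is not orthogonal to a
   point a of alpha \ Pi, so the translation x |-> x + a permutes X_s and
   exchanges the neighbours and the non-neighbours of c: c is switched, and
   not in X_s.  Hence the pairs of C_b x C_c, non-adjacent in Gamma, become
   adjacent in Gamma_s, whereas the other pairs lie in Sigma or in Pi and
   keep their adjacency, since C_a and C_c miss X_s. *)

Lemma F2_addr_eq0 (k l : 'F_2) : l != 0 -> (k + l == 0) = (k != 0).
Proof. by move: k l; do 2!case=> [[|[|[]]] ?] //=. Qed.

Lemma card_swap_half (T : finType) (X : {set T}) (P : pred T) (f : T -> T) :
    injective f -> {in X, forall x, f x \in X} ->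
    {in X, forall x, P (f x) = ~~ P x} ->
  (#|[set x in X | P x]| * 2)%N = #|X|.
Proof.
move=> f_inj fX fP; rewrite setIdE -(cardsID [set x | P x] X) muln2 -addnn.
have le_img (B C : {set T}) : f @: B \subset C -> (#|B| <= #|C|)%N.
  by move/subset_leq_card; rewrite card_imset.
congr (_ + _)%N; apply/eqP; rewrite eqn_leq !le_img //; apply/subsetP.
  by move=> _ /imsetP[x /[!inE] /andP[nPx xX] ->]; rewrite fX // fP // nPx.
by move=> _ /imsetP[x /[!inE] /andP[xX Px] ->]; rewrite fX // fP // Px.
Qed.

Section Subspaces.
Variable n : nat.
Implicit Types (U V W : {vspace vec n}) (v : vec n).

Lemma card_vspace_set U : #|[set v : vec n | v \in U]| = (2 ^ \dim U)%N.
Proof. by rewrite cardsE card_vspace card_Fp. Qed.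

Lemma card_pts U : #|pts U| = (2 ^ \dim U - 1)%N.
Proof.
rewrite -card_vspace_set (_ : [set v | v \in U] = 0 |: pts U).
  by rewrite cardsU1 !inE eqxx andbF add1n subn1.
by apply/setP => v; rewrite !inE; case: eqP => [->|]; rewrite ?mem0v ?andbT.
Qed.

Lemma card_vspaceD U W :
  #|[set v : vec n | (v \in U) && (v \notin W)]| = (2 ^ \dim U - 2 ^ \dim (U :&: W))%N.
Proof.
rewrite -!card_vspace_set -(cardsID [set v | v \in W] [set v : vec n | v \in U]).
have -> : [set v | v \in U] :&: [set v | v \in W] = [set v | v \in (U :&: W)%VS].
  by apply/setP => v; rewrite !inE memv_cap.
by rewrite addKn; apply: eq_card => v; rewrite !inE andbC.
Qed.

Lemma dim_addv_line U v : v \notin U -> \dim (U + <[v]>) = (\dim U).+1.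
Proof.
move=> vU; have v0 : v != 0 by apply: contraNneq vU => ->; rewrite mem0v.
apply/eqP; rewrite eqn_leq; apply/andP; split.
  by have [] := dimv_add_leqif U <[v]>; rewrite dim_vline v0 addn1.
rewrite (ltn_leqif (dimv_leqif_eq (addvSl U <[v]>))).
by apply: contra vU => /eqP ->; rewrite memvE addvSr.
Qed.

Lemma addv_line_eq U W v : (U <= W)%VS -> v \in W -> v \notin U ->
  \dim W = (\dim U).+1 -> (U + <[v]>)%VS = W.
Proof.
move=> sUW vW vU dW; apply/eqP; rewrite eqEdim dim_addv_line // dW leqnn andbT.
by rewrite subv_add sUW -memvE.
Qed.

Lemma dim_cap_hyperplane U V W : (U <= W)%VS -> (V <= W)%VS -> ~~ (U <= V)%VS ->
  \dim W = (\dim V).+1 -> (\dim (U :&: V)).+1 = \dim U.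
Proof.
move=> sUW sVW nUV dW; have : (U + V)%VS = W.
  apply/eqP; rewrite eqEdim subv_add sUW sVW dW.
  rewrite (ltn_leqif (dimv_leqif_eq (addvSr U V))).
  by apply: contra nUV => /eqP ->; rewrite addvSl.
by move/(congr1 (@dimv _ _)) => dUV; have := dimv_sum_cap U V; rewrite dUV dW; lia.
Qed.

Definition two_generator_clique (alpha Pi S : {vspace vec n}) : {set vec n} :=
  pts (alpha :&: Pi) :|: [set v in pts S | (v \notin alpha) && (v \notin Pi)]
    :|: [set v in pts Pi | v \notin S].

Lemma card_two_generator_clique alpha Pi S g :
    (alpha <= S)%VS -> ~~ (alpha <= Pi)%VS ->
    \dim Pi = g.+1 -> \dim S = g.+1 -> \dim (Pi :&: S) = g ->
  #|two_generator_clique alpha Pi S| = (2 ^ g.+1 - 1)%N.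
Proof.
move=> aS naPi dPi dS dPiS.
have aPi_aPiS : (alpha :&: Pi = alpha :&: (Pi :&: S))%VS.
  by rewrite capvA; apply/esym/capv_idPl; apply: subv_trans (capvSl _ _) aS.
have daPi : (\dim (alpha :&: Pi)).+1 = \dim alpha.
  rewrite aPi_aPiS; apply: dim_cap_hyperplane aS (capvSr _ _) _ _; last by rewrite dS dPiS.
  by apply: contra naPi => /subv_trans; apply; apply: capvSl.
have le_aPi_g : (\dim (alpha :&: Pi) <= g)%N by rewrite -dPiS aPi_aPiS dimvS ?capvSr.
set t := \dim (alpha :&: Pi) in daPi le_aPi_g.
have cCa : #|pts (alpha :&: Pi)| = (2 ^ t - 1)%N by rewrite card_pts.
have cCb : #|[set v in pts S | (v \notin alpha) && (v \notin Pi)]| =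
    ((2 ^ g.+1 - 2 ^ g) - (2 ^ t.+1 - 2 ^ t))%N.
  rewrite (_ : [set v in pts S | _] = [set v | (v \in S) && (v \notin Pi)]
      :\: [set v | (v \in alpha) && (v \notin Pi)]).
    rewrite cardsDS ?card_vspaceD ?dS 1?capvC ?dPiS -?daPi //.
    by apply/subsetP => v; rewrite !inE => /andP[/(subvP aS) -> ->].
  apply/setP => v; rewrite !inE; have [->|_] := eqVneq v 0; rewrite ?mem0v ?andbF //.
  by move: (subvP aS v); case: (v \in alpha) (v \in S) (v \in Pi) => [] [] [] // ->.
have cCc : #|[set v in pts Pi | v \notin S]| = (2 ^ g.+1 - 2 ^ g)%N.
  rewrite -dPi -dPiS -card_vspaceD; apply: eq_card => v; rewrite !inE.
  by have [->|_] := eqVneq v 0; rewrite ?mem0v ?andbF ?andbT.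
have cardsU_disj (X Y : {set vec n}) : X :&: Y = set0 -> #|X :|: Y| = (#|X| + #|Y|)%N.
  by move=> XY0; rewrite cardsU XY0 cards0 subn0.
rewrite /two_generator_clique !cardsU_disj ?cCa ?cCb ?cCc.
- have := leq_pexp2l (isT : (0 < 2)%N) le_aPi_g; have := expn_gt0 2 t.
  by rewrite !expnS; lia.
- apply/setP => v; rewrite !inE memv_cap.
  by case: (v \in alpha) (v \in Pi) => [] [] //; rewrite !andbF.
apply/setP => v; rewrite !inE memv_cap; move: (subvP aS v).
by case: (v \in alpha) (v \in S) (v \in Pi) => [] [] [] //=; rewrite ?andbF ?orbF // => /(_ isT).
Qed.

End Subspaces.

Section Quadric.
Variables (n : nat) (A : 'M['F_2]_(n.+1)).
Implicit Types (U V : {vspace vec n}) (x y z : vec n).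

Let bform x y := (x *m A *m y^T) ord0 ord0.

Let bformDl x y z : bform (x + y) z = bform x z + bform y z.
Proof. by rewrite /bform !mulmxDl mxE. Qed.

Let bformDr x y z : bform x (y + z) = bform x y + bform x z.
Proof. by rewrite /bform linearD /= mulmxDr mxE. Qed.

Let bformZl k x y : bform (k *: x) y = k * bform x y.
Proof. by rewrite /bform -!scalemxAl mxE. Qed.

Let bformZr k x y : bform x (k *: y) = k * bform x y.
Proof. by rewrite /bform linearZ /= -scalemxAr mxE. Qed.

Let polar_bform x y : polar A x y = bform x y + bform y x.
Proof. by rewrite /polar /qf -!/(bform _ _) bformDl !bformDr; ring. Qed.

Lemma qfD x y : qf A (x + y) = qf A x + qf A y + polar A x y.
Proof. by rewrite /polar; ring. Qed.

Lemma qfZ k x : qf A (k *: x) = k ^+ 2 * qf A x.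
Proof. by rewrite /qf -/(bform _ _) bformZl bformZr mulrA. Qed.

Lemma polarC x y : polar A x y = polar A y x.
Proof. by rewrite !polar_bform addrC. Qed.

Lemma polarDr x y z : polar A x (y + z) = polar A x y + polar A x z.
Proof. by rewrite !polar_bform bformDl bformDr; ring. Qed.

Lemma polarZr k x y : polar A x (k *: y) = k * polar A x y.
Proof. by rewrite !polar_bform bformZl bformZr; ring. Qed.

Lemma on_quadricP U : reflect {in U, forall v, qf A v = 0} (on_quadric A U).
Proof.
rewrite /on_quadric; apply: (iffP forallP) => [qU v vU | qU v]; last by apply/implyP => /qU ->.
by have /implyP/(_ vU)/eqP := qU v.
Qed.

Lemma on_quadricS U V : (V <= U)%VS -> on_quadric A U -> on_quadric A V.
Proof. by move=> /subvP sVU /on_quadricP qU; apply/on_quadricP => v /sVU /qU. Qed.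

Lemma polar_on_quadric U x y :
  on_quadric A U -> x \in U -> y \in U -> polar A x y = 0.
Proof.
move=> /on_quadricP qU xU yU.
by have := qU _ (memvD xU yU); rewrite qfD !qU // !add0r.
Qed.

Lemma on_quadric_addline U x : on_quadric A U -> qf A x = 0 ->
  on_quadric A (U + <[x]>)%VS = [forall u, (u \in U) ==> (polar A u x == 0)].
Proof.
move=> qU qx; apply/idP/forallP => [qUx u | Ux_orth].
  apply/implyP => uU; apply/eqP/(polar_on_quadric qUx).
    exact: subvP (addvSl _ _) _ uU.
  exact: subvP (addvSr _ _) _ (memv_line x).
apply/on_quadricP => _ /memv_addP[u uU [_ /vlineP[k ->] ->]].
have /implyP/(_ uU)/eqP ux := Ux_orth u.
by rewrite qfD qfZ qx (on_quadricP _ qU) // polarZr ux !mulr0 !addr0.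
Qed.

Lemma adjGE x y : x \in qpts A -> y \in qpts A ->
  adjG A x y = (x != y) && (polar A x y == 0).
Proof.
rewrite /adjG => xQ yQ; rewrite xQ yQ /=; congr (_ && _).
move: xQ yQ; rewrite !inE => /andP[_ /eqP qx] /andP[_ /eqP qy].
have qX : on_quadric A <[x]> by apply/on_quadricP => _ /vlineP[k ->]; rewrite qfZ qx mulr0.
rewrite span_cons span_seq1 on_quadric_addline //.
apply/forallP/idP => [/(_ x)/implyP-> // | /eqP xy u]; first exact: memv_line.
by apply/implyP => /vlineP[k ->]; rewrite polarC polarZr polarC xy mulr0.
Qed.

Lemma pts_sub_qpts U : on_quadric A U -> pts U \subset qpts A.
Proof.
by move=> qU; apply/subsetP => v /[!inE] /andP[vU ->]; rewrite (on_quadricP _ qU).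
Qed.

Section Alpha.
Variable alpha : {vspace vec n}.
Hypothesis qalpha : on_quadric A alpha.

Lemma XsP x : reflect
  [/\ x \in qpts A, x \notin alpha & {in alpha, forall u, polar A u x = 0}]
  (x \in Xs A alpha).
Proof.
rewrite [_ \in Xs _ _]in_set; case xQ: (x \in qpts A); last by constructor; case.
have qx : qf A x = 0 by move: xQ; rewrite inE => /andP[_ /eqP].
rewrite on_quadric_addline //=; apply: (iffP andP) => [[xa /forallP orth] | [_ xa orth]].
  by split=> // u ua; apply/eqP; have /implyP := orth u; apply.
by split=> //; apply/forallP => u; apply/implyP => /orth ->.
Qed.

Lemma Xs_addr x a : a \in alpha -> x \in Xs A alpha -> x + a \in Xs A alpha.
Proof.
move=> aa /XsP[xQ xa orth].
have xaa : x + a \notin alpha by apply: contra xa => /memvB/(_ aa); rewrite addrK.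
apply/XsP; split=> // [|u ua]; last by rewrite polarDr orth // (polar_on_quadric qalpha) ?addr0.
move: xQ; rewrite !inE => /andP[_ /eqP qx].
rewrite qfD qx (on_quadricP _ qalpha) // polarC orth // !addr0 eqxx andbT.
by apply: contraNneq xaa => ->; rewrite mem0v.
Qed.

Lemma mem_Xs S v : on_quadric A S -> (alpha <= S)%VS -> v \in pts S ->
  (v \in Xs A alpha) = (v \notin alpha).
Proof.
move=> qS aS vS; rewrite inE; case: (boolP (v \in alpha)) => va; rewrite ?andbF //=.
rewrite (subsetP (pts_sub_qpts qS)) //; apply: on_quadricS qS.
by rewrite subv_add aS -memvE; move: vS; rewrite inE => /andP[].
Qed.

Lemma Xs_gt0 S : on_quadric A S -> (alpha <= S)%VS -> (\dim alpha < \dim S)%N ->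
  (0 < #|Xs A alpha|)%N.
Proof.
move=> qS aS ltaS; set D := [set v | (v \in S) && (v \notin alpha)].
have D_gt0 : (0 < #|D|)%N by rewrite card_vspaceD (capv_idPr aS) subn_gt0 ltn_exp2l.
apply: leq_trans D_gt0 (subset_leq_card _); apply/subsetP => v; rewrite inE => /andP[vS va].
have v0 : v != 0 by apply: contraNneq va => ->; rewrite mem0v.
by rewrite (mem_Xs qS aS) ?inE ?vS.
Qed.

Lemma not_switched_totally_singular S v :
    on_quadric A S -> (alpha <= S)%VS -> (\dim alpha < \dim S)%N -> v \in pts S ->
  ~~ switched A alpha v.
Proof.
move=> qS aS ltaS vS; rewrite /switched /Ys inE; case: (boolP (v \in Xs A alpha)) => //= vX.
have va : v \in alpha by move: vX; rewrite (mem_Xs qS aS) // negbK.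
rewrite (subsetP (pts_sub_qpts qS)) //=.
have -> : [set x in Xs A alpha | adjG A v x] = Xs A alpha.
  apply/setP => x; rewrite inE andb_idr // => /XsP[xQ xa orth].
  rewrite adjGE ?orth ?(subsetP (pts_sub_qpts qS) v) // eqxx andbT.
  by apply: contraNneq xa => <-.
by have := Xs_gt0 qS aS ltaS; set N := #|Xs A alpha|; lia.
Qed.

Lemma switched_of_polar c a : c \in qpts A -> a \in alpha -> polar A c a != 0 ->
  c \notin Xs A alpha /\ switched A alpha c.
Proof.
move=> cQ aa ca.
have cX : c \notin Xs A alpha by apply/negP => /XsP[_ _ orth]; rewrite polarC orth ?eqxx in ca.
have c_neq x : x \in Xs A alpha -> c != x by move=> xX; apply: contraNneq cX => ->.
split=> //; rewrite /switched /Ys inE cX cQ /=; apply/eqP.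
apply: (card_swap_half (addIr a)) => x xX; first exact: Xs_addr aa xX.
have /XsP[xQ _ _] := xX; have /XsP[xaQ _ _] := Xs_addr aa xX.
by rewrite !adjGE ?c_neq ?Xs_addr //= polarDr F2_addr_eq0.
Qed.

Lemma clique_GsP (C : {set vec n}) : C \subset qpts A ->
    {in C &, forall x y, x != y -> (polar A x y != 0) =
      (switched A alpha x && (y \in Xs A alpha)) ||
      (switched A alpha y && (x \in Xs A alpha))} ->
  clique_Gs A alpha C.
Proof.
move=> /subsetP CQ flip; split=> [|x y xC yC xy]; first exact/subsetP.
split; rewrite ?CQ //.
by rewrite adjGE ?CQ // xy /= -[polar A x y == 0]negbK flip // addNb addbb.
Qed.

Lemma clique_Gs_totally_singular S : on_quadric A S -> (alpha <= S)%VS ->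
  (\dim alpha < \dim S)%N -> clique_Gs A alpha (pts S).
Proof.
move=> qS aS ltaS; apply: clique_GsP (pts_sub_qpts qS) _ => x y xS yS _.
rewrite !(negbTE (not_switched_totally_singular qS aS ltaS _)) //.
by rewrite (polar_on_quadric qS) ?eqxx //; [move: xS | move: yS]; rewrite inE => /andP[].
Qed.

End Alpha.

Section Generators.
Variables (g : nat) (Pi S : {vspace vec n}).
Hypothesis index_max : forall U, on_quadric A U -> (\dim U <= g.+1)%N.
Hypotheses (genPi : generator A g Pi) (genS : generator A g S).
Hypothesis dim_PiS : \dim (Pi :&: S) = g.

Lemma polar_generators_neq0 c v :
  c \in Pi -> c \notin S -> v \in S -> v \notin Pi -> polar A c v != 0.
Proof.
have [[qPi _] [qS dS]] := (genPi, genS).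
move=> cPi cS vS vPi; apply/eqP => cv0.
have eS : ((Pi :&: S) + <[v]>)%VS = S.
  by apply: addv_line_eq; rewrite ?capvSr ?memv_cap ?negb_and ?vPi ?dS ?dim_PiS.
have : on_quadric A (S + <[c]>)%VS.
  rewrite on_quadric_addline ?(on_quadricP _ qPi) //; apply/forallP => u; apply/implyP.
  rewrite -eS => /memv_addP[h /[!memv_cap] /andP[hPi _] [_ /vlineP[k ->] ->]].
  by rewrite polarC polarDr polarZr cv0 mulr0 addr0 (polar_on_quadric qPi).
by move/index_max; rewrite dim_addv_line // dS ltnn.
Qed.

Lemma polar_generators x y : (x \in Pi) || (x \in S) -> (y \in Pi) || (y \in S) ->
  (polar A x y != 0) = (x \notin Pi) && (y \notin S) || (x \notin S) && (y \notin Pi).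
Proof.
have [[qPi _] [qS _]] := (genPi, genS).
case: (boolP (x \in Pi)) => xPi; case: (boolP (x \in S)) => xS //=;
case: (boolP (y \in Pi)) => yPi; case: (boolP (y \in S)) => yS //= _ _;
first [ by rewrite (polar_on_quadric qPi) ?eqxx
      | by rewrite (polar_on_quadric qS) ?eqxx
      | by rewrite polar_generators_neq0
      | by rewrite polarC polar_generators_neq0 ].
Qed.

Variable alpha : {vspace vec n}.
Hypotheses (qalpha : on_quadric A alpha) (alpha_S : (alpha <= S)%VS).
Hypotheses (alpha_nPi : ~~ (alpha <= Pi)%VS) (alpha_ltS : (\dim alpha < \dim S)%N).

Lemma switched_off_generator v : v \in pts Pi -> v \notin S ->
  v \notin Xs A alpha /\ switched A alpha v.
Proof.
move=> vPi vS; have [a aa aPi] := subvPn alpha_nPi.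
apply: (switched_of_polar qalpha (subsetP (pts_sub_qpts genPi.1) _ vPi) aa).
move: vPi; rewrite inE => /andP[vPi _].
by apply: polar_generators_neq0 => //; apply: (subvP alpha_S).
Qed.

Lemma switched_generators v : v \in pts Pi :|: pts S ->
  switched A alpha v = (v \notin S).
Proof.
move=> vPS; have v0 : v != 0 by case/setUP: vPS; rewrite inE => /andP[].
case: (boolP (v \in S)) => vS /=.
  by apply/negbTE/(not_switched_totally_singular qalpha genS.1 alpha_S alpha_ltS); rewrite inE vS.
have vPi : v \in pts Pi by case/setUP: vPS => //; rewrite inE (negbTE vS).
by case: (switched_off_generator vPi vS).
Qed.

Lemma mem_Xs_generators v : v \in pts Pi :|: pts S ->
  (v \in Xs A alpha) = (v \in S) && (v \notin alpha).
Proof.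
move=> vPS; have v0 : v != 0 by case/setUP: vPS; rewrite inE => /andP[].
case: (boolP (v \in S)) => vS /=.
  by rewrite (mem_Xs genS.1 alpha_S) // inE vS.
have vPi : v \in pts Pi by case/setUP: vPS => //; rewrite inE (negbTE vS).
by case: (switched_off_generator vPi vS) => /negbTE.
Qed.

Lemma clique_two_generator : clique_Gs A alpha (two_generator_clique alpha Pi S).
Proof.
set C := two_generator_clique alpha Pi S.
have CPiS : C \subset pts Pi :|: pts S.
  apply/subsetP => v; rewrite !inE memv_cap.
  by case: (v \in alpha) (v \in Pi) (v \in S) (v != 0) => [] [] [] [].
have Xs_C : {in C, forall v, (v \in S) && (v \notin alpha) = (v \notin Pi)}.
  move=> v; rewrite !inE memv_cap; move: (subvP alpha_S v).
  by case: (v \in alpha) (v \in Pi) (v \in S) (v != 0) => [] [] [] [] // /(_ isT).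
have PiS_C : {in C, forall v, (v \in Pi) || (v \in S)}.
  by move=> v /(subsetP CPiS) /setUP[] /[!inE] /andP[-> _]; rewrite ?orbT.
apply: clique_GsP => [|x y xC yC _].
  apply: subset_trans CPiS _.
  by rewrite subUset !pts_sub_qpts ?genPi.1 ?genS.1.
rewrite polar_generators ?PiS_C // !switched_generators ?(subsetP CPiS) //.
rewrite !mem_Xs_generators ?(subsetP CPiS) // !Xs_C //.
by case: (x \in Pi) (x \in S) (y \in Pi) (y \in S) => [] [] [] [].
Qed.

End Generators.

End Quadric.

Theorem lemma5p1 (n : nat) (A : 'M['F_2]_(n.+1)) (g s : nat)
  (alpha : {vspace vec n}) :
  nonsingular A -> proj_index A g -> (1 <= g)%N -> (s < g)%N ->
  on_quadric A alpha -> \dim alpha = s.+1 ->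
  (* (A) *)
  (forall Sigma : {vspace vec n},
     generator A g Sigma -> (alpha <= Sigma)%VS ->
     clique_Gs A alpha (pts Sigma) /\ #|pts Sigma| = (2 ^ g.+1 - 1)%N) /\
  (* (B) *)
  (forall Pi Sigma : {vspace vec n},
     generator A g Pi -> generator A g Sigma ->
     (alpha <= Sigma)%VS -> ~~ (alpha <= Pi)%VS ->
     \dim (Pi :&: Sigma) = g ->
     let Ca := pts (alpha :&: Pi) in
     let Cb := [set v in pts Sigma | (v \notin alpha) && (v \notin Pi)] in
     let Cc := [set v in pts Pi | v \notin Sigma] in
     clique_Gs A alpha (Ca :|: Cb :|: Cc) /\
     #|Ca :|: Cb :|: Cc| = (2 ^ g.+1 - 1)%N).
Proof.
move=> _ [_ index_max] _ lt_s_g qalpha dim_alpha.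
have alpha_ltS (S : {vspace vec n}) : \dim S = g.+1 -> (\dim alpha < \dim S)%N.
  by move=> ->; rewrite dim_alpha ltnS.
split=> [S [qS dS] aS | Pi S genPi genS aS naPi dPiS Ca Cb Cc].
  split; last by rewrite card_pts dS.
  exact (clique_Gs_totally_singular qalpha qS aS (alpha_ltS S dS)).
have [[_ dPi] [_ dS]] := (genPi, genS).
split; first exact (clique_two_generator index_max genPi genS dPiS qalpha aS naPi (alpha_ltS S dS)).
exact (card_two_generator_clique aS naPi dPi dS dPiS).
Qed.
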